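(* Let $\mathbb F\subseteq\mathbb R$ be a subfield and $X\subseteq\mathbb F^n$ nonempty such that $\operatorname{conv}_{\mathbb R}(X)$ is a polyhedron. Then a nonempty subset $Y\subseteq X$ is a weak $\mathbb F$-face of $X$ if and only if $Y=\mathcal F\cap X$ for some face $\mathcal F$ of $\operatorname{conv}_{\mathbb R}(X)$. Moreover, in this case $\operatorname{conv}_{\mathbb R}(Y)=\mathcal F$.
   Context: For a subfield $\mathbb K\subseteq\mathbb R$ and $X\subseteq\mathbb R^n$: $\operatorname{conv}_{\mathbb K}(X)$ is the set of finite combinations $\sum r_sx_s$ with $x_s\in X$, $r_s\in\mathbb K\cap[0,\infty)$, $\sum r_s=1$; for $Y=\operatorname{conv}_{\mathbb K}(X)$, $\operatorname{relint}_{\mathbb K}(Y)=\{x\in Y:\forall y\in Y\ \exists z\in Y,\ t\in\mathbb K\cap(0,1),\ x=ty+(1-t)z\}$. $Y\subseteq X$ is a weak $\mathbb F$-face of $X$ if for every $U\subseteq X$, $\operatorname{conv}_{\mathbb F}(Y)\cap\operatorname{relint}_{\mathbb F}(\operatorname{conv}_{\mathbb F}(U))\ne\emptyset$ implies $U\subseteq Y$. A polyhedron is a finite intersection of closed affine half-spaces. A face of $\mathcal P\subseteq\mathbb R^n$ is $\mathcal P$ or $\mathcal P\cap H(v,w)$ where $H(v,w)=\{u:v\cdot(u-w)=0\}$, $\mathcal P\subseteq\{u:v\cdot(u-w)\ge0\}$, $\mathcal P\cap H(v,w)\ne\emptyset$. *)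

From Stdlib Require Import Reals List.
From Stdlib Require Fin.
Open Scope R_scope.

Definition Vec (n : nat) := Fin.t n -> R.

Fixpoint fsum (n : nat) : (Fin.t n -> R) -> R :=
  match n return (Fin.t n -> R) -> R with
  | O => fun _ => 0
  | S m => fun f => f Fin.F1 + fsum m (fun i => f (Fin.FS i))
  end.

Definition dot {n} (v u : Vec n) : R := fsum n (fun i => v i * u i).
Definition vsub {n} (u w : Vec n) : Vec n := fun i => u i - w i.
Definition vadd {n} (u w : Vec n) : Vec n := fun i => u i + w i.
Definition vscale {n} (t : R) (u : Vec n) : Vec n := fun i => t * u i.

Definition is_subfield (K : R -> Prop) : Prop :=
  K 0 /\ K 1 /\
  (forall x y, K x -> K y -> K (x + y)) /\
  (forall x, K x -> K (- x)) /\
  (forall x y, K x -> K y -> K (x * y)) /\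
  (forall x, K x -> x <> 0 -> K (/ x)).

Definition subsetP {n} (A B : Vec n -> Prop) : Prop := forall x, A x -> B x.

Definition coef_sum {n} (l : list (R * Vec n)) : R :=
  fold_right (fun p acc => fst p + acc) 0 l.
Definition lincomb {n} (l : list (R * Vec n)) : Vec n :=
  fold_right (fun p acc => vadd (vscale (fst p) (snd p)) acc) (fun _ => 0) l.

Definition conv {n} (K : R -> Prop) (X : Vec n -> Prop) : Vec n -> Prop :=
  fun u => exists l : list (R * Vec n),
    Forall (fun p => K (fst p) /\ 0 <= fst p /\ X (snd p)) l /\
    coef_sum l = 1 /\ u = lincomb l.

Definition relint {n} (K : R -> Prop) (Y : Vec n -> Prop) : Vec n -> Prop :=
  fun x => Y x /\ forall y, Y y -> exists z t, Y z /\ K t /\ 0 < t < 1 /\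
     x = vadd (vscale t y) (vscale (1 - t) z).

Definition weak_face {n} (F : R -> Prop) (X Y : Vec n -> Prop) : Prop :=
  subsetP Y X /\
  forall U : Vec n -> Prop, subsetP U X ->
    (exists p, conv F Y p /\ relint F (conv F U) p) -> subsetP U Y.

Definition allR : R -> Prop := fun _ => True.

Definition polyhedron {n} (P : Vec n -> Prop) : Prop :=
  exists hs : list (Vec n * R),
    forall u, P u <-> Forall (fun h => dot (fst h) u <= snd h) hs.

Definition face {n} (P F : Vec n -> Prop) : Prop :=
  (forall u, F u <-> P u) \/
  exists v w : Vec n,
    (forall u, P u -> dot v (vsub u w) >= 0) /\
    (exists u, P u /\ dot v (vsub u w) = 0) /\
    (forall u, F u <-> P u /\ dot v (vsub u w) = 0).

(* A face [Fc] of [conv_R X] is cut out by a supporting hyperplane, and a point of [Fc] in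
   the relative interior of a segment forces both endpoints onto that hyperplane; hence
   [Fc ∩ X] is a weak F-face, and [conv_R (Fc ∩ X) = Fc] since every point of [Fc] is a
   positive combination of points of [X], all of which must then lie on the hyperplane.

   Conversely, let [Y] be a weak F-face and [Fc] the face on which the defining inequalities
   of [conv_R X] that are tight on all of [Y] are tight.  Averaging points of [Y] gives
   [p ∈ conv_F Y] satisfying every other inequality strictly, so for [x ∈ Fc ∩ X] the point
   [q = p + e (p - x)] stays in [conv_R X] for a small [e ∈ F].  As [q] and [X] have
   coordinates in [F], Gaussian elimination over [F] turns a real positive convex
   representation of [q] into one with coefficients in [F]; then [p] is a positive
   F-combination of [x] and points of [X], i.e. it lies in the relative F-interior of their
   F-hull, and the weak-face property puts [x] in [Y]. *)

From Stdlib Require Import Reals Lra Lia List Classical FunctionalExtensionality ZArith.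
Open Scope R_scope.

Fixpoint nsum (m : nat) (f : nat -> R) : R :=
  match m with O => 0 | S m => f O + nsum m (fun i => f (S i)) end.

Lemma nsum_ext m : forall f g, (forall i, (i < m)%nat -> f i = g i) -> nsum m f = nsum m g.
Proof.
  induction m as [|m IH]; intros f g Hfg; simpl; auto.
  rewrite (Hfg 0%nat) by lia. f_equal. apply IH. intros; apply Hfg; lia.
Qed.

Lemma nsum_lin m : forall (f g : nat -> R) a b,
  nsum m (fun i => a * f i + b * g i) = a * nsum m f + b * nsum m g.
Proof. induction m as [|m IH]; intros; simpl; [ring | rewrite IH; ring]. Qed.

Lemma nsum_add m f g : nsum m (fun i => f i + g i) = nsum m f + nsum m g.
Proof. induction m as [|m IH] in f, g |- *; simpl; [ring | rewrite IH; ring]. Qed.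

Lemma nsum_scal m f k : nsum m (fun i => k * f i) = k * nsum m f.
Proof.
  rewrite <- (Rplus_0_r (k * _)), <- (Rmult_0_l (nsum m f)), <- nsum_lin.
  apply nsum_ext; intros; ring.
Qed.

Lemma nsum_const m k : nsum m (fun _ => k) = INR m * k.
Proof. induction m as [|m IH]; simpl nsum; [simpl; ring | rewrite IH, S_INR; ring]. Qed.

Lemma nsum_le m : forall f g, (forall i, (i < m)%nat -> f i <= g i) -> nsum m f <= nsum m g.
Proof.
  induction m as [|m IH]; intros f g Hfg; simpl; [lra|].
  apply Rplus_le_compat; [apply Hfg; lia | apply IH; intros; apply Hfg; lia].
Qed.

Lemma nsum_lt m : forall f g, (forall i, (i < m)%nat -> f i <= g i) ->
  (exists i, (i < m)%nat /\ f i < g i) -> nsum m f < nsum m g.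
Proof.
  induction m as [|m IH]; intros f g Hfg [[|k] [Hk Hlt]]; simpl; try lia.
  - apply Rplus_lt_le_compat; auto. apply nsum_le; intros; apply Hfg; lia.
  - apply Rplus_le_lt_compat; [apply Hfg; lia|].
    apply IH; [intros; apply Hfg; lia | exists k; split; auto; lia].
Qed.

Lemma nsum_indicator m : forall k a, (k < m)%nat ->
  nsum m (fun i => if Nat.eq_dec i k then a else 0) = a.
Proof.
  induction m as [|m IH]; intros [|k] a Hk; simpl; try lia.
  - rewrite nsum_const. ring.
  - rewrite Rplus_0_l. transitivity (nsum m (fun i => if Nat.eq_dec i k then a else 0));
      [apply nsum_ext; intros i _ | apply IH; lia].
    destruct (Nat.eq_dec i k); reflexivity.
Qed.

Lemma nsum_term_le m f k : (forall i, (i < m)%nat -> 0 <= f i) -> (k < m)%nat ->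
  f k <= nsum m f.
Proof.
  intros Hf Hk. rewrite <- (nsum_indicator m k (f k)) by auto.
  apply nsum_le; intros i Hi. destruct (Nat.eq_dec i k); subst; [lra | apply Hf; auto].
Qed.

Lemma nsum_eq0_nonneg m f k : (forall i, (i < m)%nat -> 0 <= f i) -> nsum m f = 0 ->
  (k < m)%nat -> f k = 0.
Proof.
  intros Hf Hs Hk. pose proof (nsum_term_le m f k Hf Hk). pose proof (Hf k Hk). lra.
Qed.

Lemma nsum_abs_le m : forall f x d, (forall i, (i < m)%nat -> Rabs (x i) <= d) ->
  Rabs (nsum m (fun i => f i * x i)) <= nsum m (fun i => Rabs (f i)) * d.
Proof.
  induction m as [|m IH]; intros f x d Hx; simpl; [rewrite Rabs_R0; lra|].
  eapply Rle_trans; [apply Rabs_triang|]. rewrite Rmult_plus_distr_r, Rabs_mult.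
  apply Rplus_le_compat.
  - apply Rmult_le_compat_l; [apply Rabs_pos | apply Hx; lia].
  - apply (IH (fun i => f (S i)) (fun i => x (S i))). intros; apply Hx; lia.
Qed.

Lemma fsum_ext n (f g : Fin.t n -> R) : (forall i, f i = g i) -> fsum n f = fsum n g.
Proof. intros H. f_equal. now apply functional_extensionality. Qed.

Lemma fsum_lin n : forall (f g : Fin.t n -> R) a b,
  fsum n (fun i => a * f i + b * g i) = a * fsum n f + b * fsum n g.
Proof. induction n as [|n IH]; intros; simpl; [ring | rewrite IH; ring]. Qed.

Lemma fsum_nsum n m : forall (g : nat -> Fin.t n -> R),
  fsum n (fun j => nsum m (fun i => g i j)) = nsum m (fun i => fsum n (g i)).
Proof.
  induction m as [|m IH]; intros g; simpl.
  - clear g. induction n as [|n IHn]; simpl; [auto | rewrite IHn; ring].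
  - rewrite <- IH. transitivity (1 * fsum n (g 0%nat) + 1 * fsum n (fun j =>
      nsum m (fun i => g (S i) j))); [rewrite <- fsum_lin; apply fsum_ext; intros; ring | ring].
Qed.

Lemma dot_lin {n} (a u w : Vec n) s t :
  dot a (fun j => s * u j + t * w j) = s * dot a u + t * dot a w.
Proof. unfold dot. rewrite <- fsum_lin. apply fsum_ext; intros; ring. Qed.

Lemma dot_vsub {n} (a u w : Vec n) : dot a (vsub u w) = dot a u - dot a w.
Proof.
  replace (vsub u w) with (fun j => 1 * u j + (-1) * w j).
  - rewrite dot_lin. ring.
  - apply functional_extensionality; intros; unfold vsub; ring.
Qed.

Lemma dot_lin_l {n} (a b u : Vec n) s t :
  dot (fun j => s * a j + t * b j) u = s * dot a u + t * dot b u.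
Proof. unfold dot. rewrite <- fsum_lin. apply fsum_ext; intros; ring. Qed.

Definition vcomb {n} (m : nat) (c : nat -> R) (pts : nat -> Vec n) : Vec n :=
  fun j => nsum m (fun i => c i * pts i j).

Lemma dot_vcomb {n} (a : Vec n) m c pts :
  dot a (vcomb m c pts) = nsum m (fun i => c i * dot a (pts i)).
Proof.
  unfold dot, vcomb.
  rewrite (fsum_ext _ _ (fun j => nsum m (fun i => c i * (a j * pts i j)))).
  - rewrite fsum_nsum. apply nsum_ext; intros i _.
    rewrite <- (Rplus_0_r (c i * _)), <- (Rmult_0_l (fsum n (fun j => a j * pts i j))),
      <- fsum_lin.
    apply fsum_ext; intros; ring.
  - intros j. rewrite <- nsum_scal. apply nsum_ext; intros; ring.
Qed.

Lemma dot_vsub_vcomb {n} (v w : Vec n) m c pts : nsum m c = 1 ->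
  dot v (vsub (vcomb m c pts) w) = nsum m (fun i => c i * dot v (vsub (pts i) w)).
Proof.
  intros Hs. rewrite dot_vsub, dot_vcomb.
  rewrite (nsum_ext m (fun i => c i * dot v (vsub (pts i) w))
    (fun i => 1 * (c i * dot v (pts i)) + (- dot v w) * c i)).
  - rewrite nsum_lin, Hs. ring.
  - intros; rewrite dot_vsub; ring.
Qed.

Fixpoint pairs_of {n} (m : nat) (c : nat -> R) (pts : nat -> Vec n) : list (R * Vec n) :=
  match m with
  | O => nil
  | S m => (c O, pts O) :: pairs_of m (fun i => c (S i)) (fun i => pts (S i))
  end.

Lemma pairs_of_spec {n} (P : R * Vec n -> Prop) m : forall c pts,
  (forall i, (i < m)%nat -> P (c i, pts i)) ->
  Forall P (pairs_of m c pts) /\ coef_sum (pairs_of m c pts) = nsum m c /\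
  lincomb (pairs_of m c pts) = vcomb m c pts.
Proof.
  induction m as [|m IH]; intros c pts HP; simpl.
  - repeat split; auto.
  - destruct (IH (fun i => c (S i)) (fun i => pts (S i))) as (HF & Hs & Hl);
      [intros; apply HP; lia|].
    repeat split; [constructor; auto; apply HP; lia | simpl; rewrite Hs; auto |].
    simpl. rewrite Hl. apply functional_extensionality; intros j. reflexivity.
Qed.

Lemma list_indexed {n} (P : R * Vec n -> Prop) (l : list (R * Vec n)) : Forall P l ->
  exists m c pts, (forall i, (i < m)%nat -> P (c i, pts i)) /\
    coef_sum l = nsum m c /\ lincomb l = vcomb m c pts.
Proof.
  intros HP. exists (length l), (fun i => fst (nth i l (0, fun _ => 0))),
    (fun i => snd (nth i l (0, fun _ => 0))).
  split.
  - intros i Hi. rewrite Forall_forall in HP. rewrite <- surjective_pairing.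
    apply HP, nth_In; auto.
  - clear HP. induction l as [|[a x] l IH]; simpl; [split; auto|].
    destruct IH as [Hs Hl]. rewrite Hs, Hl. split; auto.
Qed.

Lemma conv_indexed {n} K (X : Vec n -> Prop) u : conv K X u <->
  exists m c pts, (forall i, (i < m)%nat -> K (c i) /\ 0 <= c i /\ X (pts i)) /\
    nsum m c = 1 /\ u = vcomb m c pts.
Proof.
  split.
  - intros (l & HP & Hs & ->).
    destruct (list_indexed _ l HP) as (m & c & pts & Hi & Hs' & Hl).
    exists m, c, pts. split; [exact Hi | split; congruence].
  - intros (m & c & pts & Hi & Hs & ->).
    destruct (pairs_of_spec (fun p => K (fst p) /\ 0 <= fst p /\ X (snd p)) m c pts Hi)
      as (HF & Hs' & Hl).
    exists (pairs_of m c pts). split; [exact HF | split; congruence].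
Qed.

Lemma conv_positive_indexed {n} K (X : Vec n -> Prop) u : conv K X u ->
  exists m c pts, (forall i, (i < m)%nat -> K (c i) /\ 0 < c i /\ X (pts i)) /\
    nsum m c = 1 /\ u = vcomb m c pts.
Proof.
  intros (l & HP & Hs & ->).
  set (nz := fun p : R * Vec n => if Req_dec_T (fst p) 0 then false else true).
  assert (Hfilter : coef_sum (filter nz l) = coef_sum l /\ lincomb (filter nz l) = lincomb l).
  { clear HP Hs. induction l as [|[a x] l IH]; [auto|].
    destruct IH as [Hs Hl]. cbn [filter]. destruct (nz (a, x)) eqn:Hnz; simpl.
    - rewrite Hs, Hl. auto.
    - unfold nz in Hnz; simpl in Hnz. destruct (Req_dec_T a 0) as [->|]; [|discriminate].
      rewrite Hs, Hl. split; [ring|]. apply functional_extensionality; intros j.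
      unfold vadd, vscale. ring. }
  destruct (list_indexed (fun p => K (fst p) /\ 0 < fst p /\ X (snd p)) (filter nz l))
    as (m & c & pts & Hi & Hs' & Hl).
  - rewrite Forall_forall in *. intros [a x] Hin. apply filter_In in Hin as [Hin Hnz].
    destruct (HP _ Hin) as (? & ? & ?). unfold nz in Hnz; simpl in *.
    destruct (Req_dec_T a 0); [discriminate | repeat split; auto; lra].
  - exists m, c, pts. destruct Hfilter. split; [exact Hi | split; congruence].
Qed.

Lemma finite_pos_lower_bound {A} (Q : A -> Prop) (f : A -> R) (l : list A) :
  (forall a, In a l -> Q a -> 0 < f a) ->
  exists d, 0 < d /\ forall a, In a l -> Q a -> d <= f a.
Proof.
  induction l as [|a0 l IH]; intros Hpos.
  - exists 1. split; [lra | intros _ []].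
  - destruct IH as (d & Hd & Hle); [intros; apply Hpos; simpl; auto|].
    destruct (classic (Q a0)) as [Qa0|nQa0].
    + pose proof (Hpos a0 (or_introl eq_refl) Qa0).
      exists (Rmin d (f a0)). split; [apply Rmin_glb_lt; auto|].
      intros a [<-|Hin] Qa; [apply Rmin_r|]. eapply Rle_trans; [apply Rmin_l | auto].
    + exists d. split; auto. intros a [<-|Hin] Qa; [contradiction | auto].
Qed.

Lemma subset_conv {n} K (X : Vec n -> Prop) x : K 1 -> X x -> conv K X x.
Proof.
  intros HK Hx. exists ((1, x) :: nil). repeat split.
  - constructor; [simpl; repeat split; auto; lra | constructor].
  - simpl; ring.
  - apply functional_extensionality; intros j. unfold lincomb, vadd, vscale; simpl. ring.
Qed.

Lemma conv_mono {n} K K' (A B : Vec n -> Prop) u :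
  (forall t, K t -> K' t) -> (forall v, A v -> B v) -> conv K A u -> conv K' B u.
Proof.
  intros HK HAB (l & HP & Hl). exists l. split; auto. eapply Forall_impl; [|exact HP].
  intros [a b]; simpl; intros (? & ? & ?); auto.
Qed.

Definition scons {A} (a : A) (f : nat -> A) : nat -> A :=
  fun i => match i with O => a | S i => f i end.

(* An equation [sum_i (fst e i) * x_i = snd e] in the unknowns [x_0], ..., [x_(m-1)]. *)
Definition lin_eq := ((nat -> R) * R)%type.

Definition solves (m : nat) (x : nat -> R) (e : lin_eq) : Prop :=
  nsum m (fun i => fst e i * x i) = snd e.

Definition eliminate (e0 e : lin_eq) : lin_eq :=
  (fun i => fst e (S i) - fst e O / fst e0 O * fst e0 (S i),
   snd e - fst e O / fst e0 O * snd e0).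

Definition back_substitute (m : nat) (e0 : lin_eq) (y : nat -> R) : R :=
  (snd e0 - nsum m (fun i => fst e0 (S i) * y i)) / fst e0 O.

Lemma exists_error_budget s a eps : 0 <= s -> 0 < a -> 0 < eps ->
  exists d, (0 < d < eps) /\ s * d / a < eps.
Proof.
  intros Hs Ha Heps. exists (eps * a / (1 + s + a)). repeat split.
  - apply Rdiv_lt_0_compat; [apply Rmult_lt_0_compat|]; lra.
  - apply Rmult_lt_reg_r with (1 + s + a); [lra|]. field_simplify; nra.
  - apply Rmult_lt_reg_r with (1 + s + a); [lra|]. field_simplify; nra.
Qed.

Lemma nsum_eliminate m e0 e y :
  nsum m (fun i => fst (eliminate e0 e) i * y i) =
  nsum m (fun i => fst e (S i) * y i) - fst e O / fst e0 O * nsum m (fun i => fst e0 (S i) * y i).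
Proof.
  rewrite (nsum_ext m _ (fun i => 1 * (fst e (S i) * y i) +
    (- (fst e O / fst e0 O)) * (fst e0 (S i) * y i))) by (intros; simpl; ring).
  rewrite nsum_lin. ring.
Qed.

Lemma eliminate_solves m e0 e x : fst e0 O <> 0 ->
  solves (S m) x e0 -> solves (S m) x e -> solves m (fun i => x (S i)) (eliminate e0 e).
Proof.
  unfold solves; intros Ha H0 H. rewrite nsum_eliminate. simpl in *.
  replace (nsum m (fun i => fst e (S i) * x (S i))) with (snd e - fst e O * x O) by lra.
  replace (nsum m (fun i => fst e0 (S i) * x (S i))) with (snd e0 - fst e0 O * x O) by lra.
  field. auto.
Qed.

Lemma back_substitute_solves m e0 e y : fst e0 O <> 0 ->
  solves m y (eliminate e0 e) -> solves (S m) (scons (back_substitute m e0 y) y) e.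
Proof.
  unfold solves, back_substitute; intros Ha H. rewrite nsum_eliminate in H. simpl in *.
  set (r := fst e O / fst e0 O) in *.
  replace (nsum m (fun i => fst e (S i) * y i))
    with (snd e - r * snd e0 + r * nsum m (fun i => fst e0 (S i) * y i)) by lra.
  unfold r.
  field. auto.
Qed.

Lemma back_substitute_close m e0 x y d : fst e0 O <> 0 -> solves (S m) x e0 ->
  (forall i, (i < m)%nat -> Rabs (y i - x (S i)) <= d) ->
  Rabs (back_substitute m e0 y - x O) <=
  nsum m (fun i => Rabs (fst e0 (S i))) * d / Rabs (fst e0 O).
Proof.
  unfold solves, back_substitute; simpl; intros Ha Hx Hd.
  replace ((snd e0 - nsum m (fun i => fst e0 (S i) * y i)) / fst e0 O - x O)
    with (- nsum m (fun i => fst e0 (S i) * (y i - x (S i))) / fst e0 O).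
  - unfold Rdiv. rewrite Rabs_mult, Rabs_Ropp, Rabs_inv.
    apply Rmult_le_compat_r; [left; apply Rinv_0_lt_compat, Rabs_pos_lt; auto|].
    apply nsum_abs_le; auto.
  - rewrite (nsum_ext m _ (fun i => 1 * (fst e0 (S i) * y i) + (-1) * (fst e0 (S i) * x (S i))))
      by (intros; ring).
    rewrite nsum_lin. field_simplify; auto. rewrite <- Hx. field; auto.
Qed.

Lemma conv_in_hyperplane {n} K (A : Vec n -> Prop) v w u :
  (forall a, A a -> dot v (vsub a w) = 0) -> conv K A u -> dot v (vsub u w) = 0.
Proof.
  intros HA Hu. apply conv_indexed in Hu as (m & c & pts & Hi & Hs & ->).
  rewrite dot_vsub_vcomb by auto. rewrite (nsum_ext m _ (fun _ => 0)), nsum_const; [ring|].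
  intros i Hi'. destruct (Hi i Hi') as (_ & _ & HA'). rewrite HA; auto. ring.
Qed.

Lemma conv_face_trace {n} (X Y Fc : Vec n -> Prop) : face (conv allR X) Fc ->
  (forall u, Y u <-> Fc u /\ X u) -> forall u, conv allR Y u <-> Fc u.
Proof.
  assert (HXP : forall x, X x -> conv allR X x) by (intros; apply subset_conv; [exact I | auto]).
  intros [HFc | (v & w & Hge & _ & HFc)] HY u.
  - rewrite HFc. split; apply conv_mono; auto; intros x Hx.
    + apply HY in Hx. tauto.
    + apply HY. split; auto. apply HFc, HXP, Hx.
  - rewrite HFc. split.
    + intros Hu. split.
      { apply (conv_mono allR allR Y X); auto. intros x Hx. apply HY in Hx. tauto. }
      apply (conv_in_hyperplane allR Y); auto. intros y Hy. apply HY in Hy as [Hy _].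
      apply HFc in Hy. apply Hy.
    + intros [HuP Hu0]. apply conv_positive_indexed in HuP as (m & c & pts & Hi & Hs & Hu).
      assert (Hterm : forall i, (i < m)%nat -> 0 <= c i * dot v (vsub (pts i) w)).
      { intros i Hi'. destruct (Hi i Hi') as (_ & ? & ?). apply Rmult_le_pos; [lra|].
        apply Rge_le, Hge, HXP; auto. }
      rewrite Hu, dot_vsub_vcomb in Hu0 by auto.
      apply conv_indexed. exists m, c, pts. split; [|split; auto].
      intros i Hi'. destruct (Hi i Hi') as (? & ? & ?). split; [exact I | split; [lra |]].
      apply HY. split; auto. apply HFc. split; [apply HXP; auto|].
      pose proof (nsum_eq0_nonneg m _ i Hterm Hu0 Hi') as Hzero.
      apply Rmult_integral in Hzero as [Hzero|]; auto; lra.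
Qed.

(* [v] is minus the sum of the normals of the inequalities selected by [T]. *)
Lemma exists_face_normal {n} (P : Vec n -> Prop) (T : Vec n * R -> Prop) (y0 : Vec n) hs :
  (forall h, In h hs -> forall u, P u -> dot (fst h) u <= snd h) ->
  (forall h, In h hs -> T h -> dot (fst h) y0 = snd h) ->
  exists v, forall u, P u -> 0 <= dot v (vsub u y0) /\
    (dot v (vsub u y0) = 0 <-> forall h, In h hs -> T h -> dot (fst h) u = snd h).
Proof.
  induction hs as [|h hs IH]; intros Hle Hy0.
  - exists (fun _ => 0). intros u _. unfold dot. rewrite (fsum_ext _ _ (fun i => 0 * 0 + 0 * 0)).
    + rewrite fsum_lin. split; [lra|]. split; [intros _ _ []|]. intros; ring.
    + intros; ring.
  - destruct IH as [v Hv]; [intros; apply Hle; simpl; auto | intros; apply Hy0; simpl; auto|].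
    destruct (classic (T h)) as [Th|nTh].
    + exists (fun j => 1 * v j + (-1) * fst h j). intros u Pu. destruct (Hv u Pu) as [Hv1 Hv2].
      assert (Hh : dot (fst h) u <= snd h) by (apply Hle; simpl; auto).
      rewrite dot_lin_l, !dot_vsub, (Hy0 h) by (simpl; auto). rewrite dot_vsub in Hv1, Hv2.
      split; [lra|]. split.
      * intros Hz h' [<-|Hin] Th'; [lra|]. apply Hv2; auto. lra.
      * intros Hall. assert (dot (fst h) u = snd h) by (apply Hall; simpl; auto).
        assert (dot v u - dot v y0 = 0) by (apply Hv2; intros; apply Hall; simpl; auto). lra.
    + exists v. intros u Pu. destruct (Hv u Pu) as [Hv1 Hv2]. split; auto. rewrite Hv2. split.
      * intros Hall h' [<-|Hin] Th'; [contradiction | auto].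
      * intros Hall h' Hin. apply Hall. simpl; auto.
Qed.

Lemma finite_witnesses {n} (Y : Vec n -> Prop) (Q : Vec n * R -> Prop) y0 hs : Y y0 ->
  (forall h, In h hs -> Q h -> exists y, Y y /\ dot (fst h) y < snd h) ->
  exists m pts, (0 < m)%nat /\ (forall i, (i < m)%nat -> Y (pts i)) /\
    forall h, In h hs -> Q h -> exists i, (i < m)%nat /\ dot (fst h) (pts i) < snd h.
Proof.
  intros Hy0. induction hs as [|h hs IH]; intros Hwit.
  - exists 1%nat, (fun _ => y0). repeat split; auto. intros _ [].
  - destruct IH as (m & pts & Hm & HY & Hh); [intros; apply Hwit; simpl; auto|].
    destruct (classic (Q h)) as [Qh|nQh].
    + destruct (Hwit h (or_introl eq_refl) Qh) as (y & Hy & Hyl).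
      exists (S m), (scons y pts). split; [lia|]. split.
      * intros [|i] Hi; simpl; auto. apply HY; lia.
      * intros h' [<-|Hin] Qh'; [exists 0%nat; split; auto; lia|].
        destruct (Hh h' Hin Qh') as (i & Hi & Hl). exists (S i); split; auto; lia.
    + exists m, pts. repeat split; auto. intros h' [<-|Hin] Qh'; [contradiction | auto].
Qed.

Section Subfield.
Context {F : R -> Prop} (HF : is_subfield F).

Lemma subfield_0 : F 0.
Proof. apply HF. Qed.
Lemma subfield_1 : F 1.
Proof. apply HF. Qed.
Lemma subfield_add x y : F x -> F y -> F (x + y).
Proof. apply HF. Qed.
Lemma subfield_opp x : F x -> F (- x).
Proof. apply HF. Qed.
Lemma subfield_mul x y : F x -> F y -> F (x * y).
Proof. apply HF. Qed.
Lemma subfield_inv x : F x -> x <> 0 -> F (/ x).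
Proof. apply HF. Qed.

Lemma subfield_sub x y : F x -> F y -> F (x - y).
Proof. intros; apply subfield_add, subfield_opp; auto. Qed.

Lemma subfield_div x y : F x -> F y -> y <> 0 -> F (x / y).
Proof. intros; apply subfield_mul, subfield_inv; auto. Qed.

Lemma subfield_INR k : F (INR k).
Proof.
  induction k; [apply subfield_0|]. rewrite S_INR. apply subfield_add; auto. apply subfield_1.
Qed.

Lemma subfield_IZR z : F (IZR z).
Proof.
  destruct (Z_le_gt_dec 0 z).
  - rewrite <- (Z2Nat.id z), <- INR_IZR_INZ by lia. apply subfield_INR.
  - replace z with (- Z.of_nat (Z.to_nat (- z)))%Z by lia.
    rewrite opp_IZR, <- INR_IZR_INZ. apply subfield_opp, subfield_INR.
Qed.

Lemma subfield_nsum m f : (forall i, (i < m)%nat -> F (f i)) -> F (nsum m f).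
Proof.
  revert f. induction m as [|m IH]; intros f Hf; simpl; [apply subfield_0|].
  apply subfield_add; [apply Hf; lia | apply IH; intros; apply Hf; lia].
Qed.

Lemma subfield_vcomb {n} m c (pts : nat -> Vec n) j :
  (forall i, (i < m)%nat -> F (c i) /\ F (pts i j)) -> F (vcomb m c pts j).
Proof.
  intros H. apply subfield_nsum. intros i Hi. destruct (H i Hi). apply subfield_mul; auto.
Qed.

(* The fractions [k/N] already lie in [F]. *)
Lemma subfield_dense x eps : 0 < eps -> exists r, F r /\ Rabs (r - x) < eps.
Proof.
  intros Heps. destruct (archimed_cor1 eps Heps) as (N & HN & HN0).
  assert (HNpos : 0 < INR N) by (apply lt_0_INR; lia).
  set (k := up (x * INR N)). destruct (archimed (x * INR N)) as [Hk1 Hk2]. fold k in Hk1, Hk2.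
  exists (IZR k / INR N). split.
  - apply subfield_div; [apply subfield_IZR | apply subfield_INR | lra].
  - replace (IZR k / INR N - x) with ((IZR k - x * INR N) / INR N) by (field; lra).
    rewrite Rabs_pos_eq.
    + apply Rle_lt_trans with (/ INR N); auto. unfold Rdiv.
      rewrite <- (Rmult_1_l (/ INR N)) at 2.
      apply Rmult_le_compat_r; [left; apply Rinv_0_lt_compat |]; lra.
    + apply Rle_mult_inv_pos; lra.
Qed.

Lemma subfield_between_0 d : 0 < d -> exists r, F r /\ 0 < r < d.
Proof.
  intros Hd. destruct (subfield_dense (d / 2) (d / 2)) as (r & Hr & Habs); [lra|].
  exists r. split; auto. apply Rabs_def2 in Habs. lra.
Qed.

Definition lin_eq_over (m : nat) (e : lin_eq) : Prop :=
  (forall i, (i < m)%nat -> F (fst e i)) /\ F (snd e).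

Lemma eliminate_lin_eq_over m e0 e : fst e0 O <> 0 ->
  lin_eq_over (S m) e0 -> lin_eq_over (S m) e -> lin_eq_over m (eliminate e0 e).
Proof.
  intros Ha [H0c H0d] [Hc Hd]. assert (HaF : F (fst e0 O)) by (apply H0c; lia).
  assert (HqF : F (fst e O / fst e0 O)) by (apply subfield_div; auto; apply Hc; lia).
  split; simpl.
  - intros i Hi. apply subfield_sub, subfield_mul; auto; [apply Hc | apply H0c]; lia.
  - apply subfield_sub, subfield_mul; auto.
Qed.

(* Gaussian elimination on the first unknown; an unknown occurring in no equation is
   approximated freely by density of [F]. *)
Lemma subfield_solutions_dense m : forall (E : lin_eq -> Prop) x eps,
  (forall e, E e -> lin_eq_over m e) -> (forall e, E e -> solves m x e) -> 0 < eps ->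
  exists y, (forall i, (i < m)%nat -> F (y i) /\ Rabs (y i - x i) < eps) /\
    (forall e, E e -> solves m y e).
Proof.
  induction m as [|m IH]; intros E x eps HEF Hx Heps.
  { exists x. split; [intros; lia | auto]. }
  destruct (classic (exists e0, E e0 /\ fst e0 O <> 0)) as [(e0 & HE0 & Ha) | Hfree].
  - set (S0 := nsum m (fun i => Rabs (fst e0 (S i)))).
    assert (HS0 : 0 <= S0) by (rewrite <- (Rmult_0_r (INR m)), <- nsum_const;
      apply nsum_le; intros; apply Rabs_pos).
    destruct (exists_error_budget S0 (Rabs (fst e0 O)) eps) as (d & Hd); auto.
    { apply Rabs_pos_lt; auto. }
    destruct (IH (fun e' => exists e, E e /\ e' = eliminate e0 e) (fun i => x (S i)) d)
      as (y & Hy & Hys).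
    + intros e' (e & He & ->). apply eliminate_lin_eq_over; auto.
    + intros e' (e & He & ->). apply eliminate_solves; auto.
    + lra.
    + exists (scons (back_substitute m e0 y) y). split.
      * intros [|i] Hi; simpl; [split | destruct (Hy i); [lia | split; auto; lra]].
        -- destruct (HEF e0 HE0) as [Hc Hd0]. apply subfield_div; [| apply Hc; lia | exact Ha].
           apply subfield_sub, subfield_nsum; auto. intros i Hi'.
           apply subfield_mul; [apply Hc | apply Hy]; lia.
        -- eapply Rle_lt_trans;
             [apply (back_substitute_close m e0 x y d Ha (Hx e0 HE0)) | fold S0; lra].
           intros i Hi'. left. apply Hy; auto.
      * intros e He. apply back_substitute_solves; auto. apply Hys. eauto.
  - assert (Hz : forall e, E e -> fst e O = 0).
    { intros e He. apply NNPP. intros Hn. apply Hfree. eauto. }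
    destruct (IH (fun e' => exists e, E e /\ e' = (fun i => fst e (S i), snd e))
      (fun i => x (S i)) eps) as (y & Hy & Hys); auto.
    + intros e' (e & He & ->). destruct (HEF e He) as [Hc Hd].
      split; auto. intros i Hi. apply Hc. simpl. lia.
    + intros e' (e & He & ->). pose proof (Hx e He) as Hxe. unfold solves in *. simpl in *.
      rewrite Hz in Hxe; auto. lra.
    + destruct (subfield_dense (x O) eps Heps) as (r & Hr & Hrx).
      exists (scons r y). split.
      * intros [|i] Hi; simpl; auto. apply Hy. lia.
      * intros e He. pose proof (Hys _ (ex_intro _ e (conj He eq_refl))) as Hye.
        unfold solves in *. simpl in *. rewrite Hz; auto. lra.
Qed.

Lemma subfield_positive_coefs {n} m c (pts : nat -> Vec n) q :
  (forall i, (i < m)%nat -> 0 < c i) -> nsum m c = 1 -> q = vcomb m c pts ->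
  (forall i, (i < m)%nat -> forall j, F (pts i j)) -> (forall j, F (q j)) ->
  exists c', (forall i, (i < m)%nat -> F (c' i) /\ 0 < c' i) /\
    nsum m c' = 1 /\ q = vcomb m c' pts.
Proof.
  intros Hc Hs Hq HptsF HqF.
  destruct (finite_pos_lower_bound (fun i => (i < m)%nat) c (seq 0 m)) as (eps & Heps & Hle);
    [intros; apply Hc; auto|].
  set (E := fun e : lin_eq => e = (fun _ => 1, 1) \/ exists j, e = (fun i => pts i j, q j)).
  destruct (subfield_solutions_dense m E c eps) as (c' & Hc' & Hsol); auto.
  - intros e [-> | (j & ->)]; split; simpl; auto using subfield_1.
  - intros e [-> | (j & ->)]; unfold solves; simpl.
    + transitivity (nsum m c); auto. apply nsum_ext; intros; ring.
    + rewrite Hq. unfold vcomb. apply nsum_ext; intros; ring.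
  - exists c'. split; [|split].
    + intros i Hi. destruct (Hc' i Hi) as [HF' Habs]. apply Rabs_def2 in Habs.
      assert (eps <= c i) by (apply Hle; auto; apply in_seq; lia). split; auto; lra.
    + pose proof (Hsol _ (or_introl eq_refl)) as Hsum. unfold solves in Hsum; simpl in Hsum.
      rewrite <- Hsum. apply nsum_ext; intros; ring.
    + apply functional_extensionality; intros j.
      pose proof (Hsol _ (or_intror (ex_intro _ j eq_refl))) as Hj. unfold solves in Hj.
      simpl in Hj. rewrite <- Hj. apply nsum_ext; intros; ring.
Qed.

Lemma conv_allR_subfield {n} (X : Vec n -> Prop) q :
  (forall x, X x -> forall j, F (x j)) -> (forall j, F (q j)) -> conv allR X q ->
  exists m c pts, (forall i, (i < m)%nat -> F (c i) /\ 0 < c i /\ X (pts i)) /\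
    nsum m c = 1 /\ q = vcomb m c pts.
Proof.
  intros HXF HqF Hq.
  destruct (conv_positive_indexed allR X q Hq) as (m & c & pts & Hi & Hs & Hqc).
  destruct (subfield_positive_coefs m c pts q) as (c' & Hc' & Hs' & Hq'); auto.
  - intros i Hi'. apply Hi; auto.
  - intros i Hi' j. apply HXF, Hi; auto.
  - exists m, c', pts. split; auto. intros i Hi'. destruct (Hc' i Hi'), (Hi i Hi') as (_ & _ & ?).
    auto.
Qed.

Lemma conv_points_vcomb {n} m (pts : nat -> Vec n) (l : list (R * Vec n)) :
  Forall (fun p => F (fst p) /\ 0 <= fst p /\ exists i, (i < m)%nat /\ snd p = pts i) l ->
  exists nu, (forall i, F (nu i) /\ 0 <= nu i) /\
    nsum m nu = coef_sum l /\ lincomb l = vcomb m nu pts.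
Proof.
  induction l as [|[a x] l IH]; intros Hl.
  - exists (fun _ => 0). split; [intros; split; [apply subfield_0 | lra]|].
    rewrite nsum_const. split; [simpl; ring|].
    apply functional_extensionality; intros j. unfold vcomb. simpl.
    rewrite (nsum_ext m _ (fun _ => 0)), nsum_const by (intros; ring). ring.
  - inversion Hl as [|? ? (Ha & Ha0 & i0 & Hi0 & Hx) Hl']; subst; simpl in Ha, Ha0, Hx.
    destruct (IH Hl') as (nu & Hnu & Hs & Hc).
    set (ind := fun (b : R) i => if Nat.eq_dec i i0 then b else 0).
    exists (fun i => nu i + ind a i). split; [|split].
    + intros i. destruct (Hnu i). unfold ind.
      destruct (Nat.eq_dec i i0); (split; [apply subfield_add; auto using subfield_0 | lra]).
    + unfold ind. rewrite nsum_add, nsum_indicator, Hs by auto. simpl. ring.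
    + apply functional_extensionality; intros j. simpl. rewrite Hc. unfold vadd, vscale, vcomb.
      rewrite (nsum_ext m (fun i => (nu i + ind a i) * pts i j)
        (fun i => nu i * pts i j + ind (a * pts i0 j) i)).
      * unfold ind. rewrite nsum_add, nsum_indicator, Hx by auto. ring.
      * intros i _. unfold ind. destruct (Nat.eq_dec i i0); subst; ring.
Qed.

Lemma positive_vcomb_relint {n} m c (pts : nat -> Vec n) :
  (forall i, (i < m)%nat -> F (c i) /\ 0 < c i) -> nsum m c = 1 ->
  relint F (conv F (fun v => exists i, (i < m)%nat /\ v = pts i)) (vcomb m c pts).
Proof.
  intros Hc Hs. split.
  { apply conv_indexed. exists m, c, pts. split; auto.
    intros i Hi. destruct (Hc i Hi). repeat split; auto; [lra | eauto]. }
  intros y (l & Hl & Hsl & ->).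
  destruct (conv_points_vcomb m pts l) as (nu & Hnu & Hsnu & Hcomb); auto.
  rewrite Hsl in Hsnu. rewrite Hcomb.
  assert (Hnu1 : forall i, (i < m)%nat -> nu i <= 1).
  { intros i Hi. rewrite <- Hsnu. apply nsum_term_le; auto. intros; apply Hnu. }
  destruct (finite_pos_lower_bound (fun i => (i < m)%nat) c (seq 0 m)) as (d & Hd & Hle);
    [intros; apply Hc; auto|].
  destruct (subfield_between_0 (Rmin d 1)) as (t & Ht & Ht0 & Htd); [apply Rmin_glb_lt; lra|].
  pose proof (Rmin_l d 1). pose proof (Rmin_r d 1).
  set (c' := fun i => (c i - t * nu i) / (1 - t)).
  exists (vcomb m c' pts), t. split; [|split; [auto | split; [lra|]]].
  - apply conv_indexed. exists m, c', pts. split; [|split; auto].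
    + intros i Hi. destruct (Hc i Hi), (Hnu i). pose proof (Hnu1 i Hi).
      assert (d <= c i) by (apply Hle; auto; apply in_seq; lia).
      unfold c'. repeat split; eauto.
      * apply subfield_div; [apply subfield_sub, subfield_mul; auto | | lra].
        apply subfield_sub; auto using subfield_1.
      * apply Rle_mult_inv_pos; [|lra]. nra.
    + unfold c'. rewrite (nsum_ext m _ (fun i => / (1 - t) * c i + (- t / (1 - t)) * nu i)).
      * rewrite nsum_lin, Hs, Hsnu. field. lra.
      * intros; field; lra.
  - apply functional_extensionality; intros j. unfold vadd, vscale, vcomb, c'.
    rewrite (nsum_ext m (fun i => (c i - t * nu i) / (1 - t) * pts i j)
      (fun i => / (1 - t) * (c i * pts i j) + (- t / (1 - t)) * (nu i * pts i j))).
    + rewrite nsum_lin. field. lra.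
    + intros; field; lra.
Qed.

Lemma face_trace_weak_face {n} (X Y Fc : Vec n -> Prop) : face (conv allR X) Fc ->
  (forall u, Y u <-> Fc u /\ X u) -> weak_face F X Y.
Proof.
  assert (HXP : forall x, X x -> conv allR X x) by (intros; apply subset_conv; [exact I | auto]).
  intros HFace HY. split; [intros u Hu; apply HY, Hu|].
  intros U HUX (p & HpY & _ & Hrel) u Hu. apply HY. split; auto.
  destruct HFace as [HFc | (v & w & Hge & _ & HFc)]; [apply HFc, HXP; auto|].
  destruct (Hrel u (subset_conv F U u subfield_1 Hu)) as (z & t & Hz & _ & Ht & Hp).
  assert (Hp0 : dot v (vsub p w) = 0).
  { apply (conv_in_hyperplane F Y); auto. intros y Hy. apply HY in Hy as [Hy _].
    apply HFc in Hy. apply Hy. }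
  assert (Hz0 : dot v (vsub z w) >= 0).
  { apply Hge. apply (conv_mono F allR U X); auto. intros; exact I. }
  assert (Hu0 : dot v (vsub u w) >= 0) by (apply Hge, HXP; auto).
  assert (Hlin : dot v (vsub p w) = t * dot v (vsub u w) + (1 - t) * dot v (vsub z w)).
  { rewrite !dot_vsub, Hp. unfold vadd, vscale. rewrite dot_lin. ring. }
  apply HFc. split; [apply HXP; auto | nra].
Qed.

Section PolyhedralTrace.
Variables (n : nat) (X Y : Vec n -> Prop) (hs : list (Vec n * R)).
Hypothesis HXF : forall x, X x -> forall j, F (x j).
Hypothesis Hhs : forall u, conv allR X u <-> Forall (fun h => dot (fst h) u <= snd h) hs.
Hypothesis HYX : subsetP Y X.

Definition tight (h : Vec n * R) : Prop := forall y, Y y -> dot (fst h) y = snd h.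

Definition tight_face (u : Vec n) : Prop :=
  conv allR X u /\ forall h, In h hs -> tight h -> dot (fst h) u = snd h.

Lemma conv_le h u : In h hs -> conv allR X u -> dot (fst h) u <= snd h.
Proof. intros Hin Hu. apply Hhs in Hu. rewrite Forall_forall in Hu. auto. Qed.

Lemma le_conv u : (forall h, In h hs -> dot (fst h) u <= snd h) -> conv allR X u.
Proof. intros Hu. apply Hhs. rewrite Forall_forall. auto. Qed.

Lemma X_le h x : In h hs -> X x -> dot (fst h) x <= snd h.
Proof. intros Hin Hx. apply conv_le; auto. apply subset_conv; [exact I | auto]. Qed.

Lemma tight_face_is_face y0 : Y y0 -> face (conv allR X) tight_face.
Proof.
  intros Hy0. destruct (exists_face_normal (conv allR X) tight y0 hs) as [v Hv].
  - intros h Hin u Hu. apply conv_le; auto.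
  - intros h _ Ht. apply Ht, Hy0.
  - right. exists v, y0. split; [|split].
    + intros u Hu. apply Rle_ge, Hv, Hu.
    + exists y0. assert (Hy0P : conv allR X y0) by (apply subset_conv; [exact I | auto]).
      split; auto. apply (Hv y0 Hy0P). intros h _ Ht. apply Ht, Hy0.
    + intros u. unfold tight_face. split.
      * intros [Hu Ht]. split; auto. apply (Hv u Hu); auto.
      * intros [Hu Hz]. split; auto. apply (Hv u Hu); auto.
Qed.

(* Averaging one witness of slack for each non-tight inequality. *)
Lemma exists_barycenter y0 : Y y0 -> exists p, conv F Y p /\ (forall j, F (p j)) /\
  forall h, In h hs -> (tight h -> dot (fst h) p = snd h) /\ (~ tight h -> dot (fst h) p < snd h).
Proof.
  intros Hy0. destruct (finite_witnesses Y (fun h => ~ tight h) y0 hs Hy0)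
    as (m & pts & Hm & HYp & Hslack).
  { intros h Hin Hnt. apply not_all_ex_not in Hnt as (y & Hy).
    apply imply_to_and in Hy as [Hy Hne]. exists y. split; auto.
    pose proof (X_le h y Hin (HYX y Hy)). lra. }
  assert (Hmpos : 0 < INR m) by (apply lt_0_INR; auto).
  assert (HinvF : F (/ INR m)) by (apply subfield_inv; [apply subfield_INR | lra]).
  assert (Havg : forall a, nsum m (fun _ => / INR m * a) = a) by
    (intros; rewrite nsum_const; field; lra).
  exists (vcomb m (fun _ => / INR m) pts). split; [|split].
  - apply conv_indexed. exists m, (fun _ => / INR m), pts. split; [|split; auto].
    + intros i Hi. repeat split; auto. left. apply Rinv_0_lt_compat; auto.
    + transitivity (nsum m (fun _ => / INR m * 1)); [apply nsum_ext; intros; ring | apply Havg].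
  - intros j. apply subfield_vcomb. intros i Hi. split; [exact HinvF | apply HXF, HYX, HYp; auto].
  - intros h Hin. rewrite dot_vcomb. split.
    + intros Ht. rewrite <- (Havg (snd h)). apply nsum_ext; intros i Hi.
      rewrite Ht; auto.
    + intros Hnt. rewrite <- (Havg (snd h)). apply nsum_lt.
      * intros i Hi. apply Rmult_le_compat_l; [left; apply Rinv_0_lt_compat; auto|].
        apply X_le; auto.
      * destruct (Hslack h Hin Hnt) as (i & Hi & Hl). exists i. split; auto.
        apply Rmult_lt_compat_l; auto. apply Rinv_0_lt_compat; auto.
Qed.

Lemma exists_step_beyond p x :
  (forall h, In h hs ->
    (tight h -> dot (fst h) p = snd h) /\ (~ tight h -> dot (fst h) p < snd h)) ->
  (forall h, In h hs -> tight h -> dot (fst h) x = snd h) ->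
  exists e, F e /\ 0 < e /\ conv allR X (fun j => (1 + e) * p j + (- e) * x j).
Proof.
  intros Hp Hx.
  set (room := fun h : Vec n * R =>
    (snd h - dot (fst h) p) / (Rabs (dot (fst h) p - dot (fst h) x) + 1)).
  destruct (finite_pos_lower_bound (fun h => ~ tight h) room hs) as (d & Hd & Hle).
  { intros h Hin Hnt. apply Rdiv_lt_0_compat; [apply Hp in Hin; apply Hin in Hnt; lra|].
    pose proof (Rabs_pos (dot (fst h) p - dot (fst h) x)). lra. }
  destruct (subfield_between_0 d Hd) as (e & He & He0 & Hed).
  exists e. split; [|split]; auto. apply le_conv. intros h Hin. rewrite dot_lin.
  destruct (classic (tight h)) as [Ht|Hnt].
  - rewrite (proj1 (Hp h Hin) Ht), Hx; auto. lra.
  - pose proof (proj2 (Hp h Hin) Hnt) as Hph. pose proof (Hle h Hin Hnt) as Hdr.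
    pose proof (Rle_abs (dot (fst h) p - dot (fst h) x)) as Habs.
    set (D := Rabs (dot (fst h) p - dot (fst h) x)) in *.
    assert (HD : 0 <= D) by apply Rabs_pos.
    assert (Hroom : snd h - dot (fst h) p = room h * (D + 1)) by (unfold room; fold D; field; lra).
    nra.
Qed.

Lemma weak_face_contains_trace y0 x : weak_face F X Y -> Y y0 -> X x ->
  (forall h, In h hs -> tight h -> dot (fst h) x = snd h) -> Y x.
Proof.
  intros [_ HW] Hy0 Hx Hxt.
  destruct (exists_barycenter y0 Hy0) as (p & HpY & HpF & Hp).
  destruct (exists_step_beyond p x Hp Hxt) as (e & He & He0 & Hq).
  set (q := fun j => (1 + e) * p j + (- e) * x j) in Hq.
  destruct (conv_allR_subfield X q HXF) as (m & c & pts & Hc & Hs & Hqc); auto.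
  { intros j. unfold q. apply subfield_add; apply subfield_mul; auto using subfield_opp.
    apply subfield_add; auto using subfield_1. }
  set (c' := scons (e / (1 + e)) (fun i => c i / (1 + e))).
  set (pts' := scons x pts).
  assert (Hpc : p = vcomb (S m) c' pts').
  { apply functional_extensionality; intros j. unfold vcomb, c', pts'. simpl.
    rewrite (nsum_ext m _ (fun i => / (1 + e) * (c i * pts i j))) by (intros; simpl; field; lra).
    rewrite nsum_scal. change (nsum m (fun i => c i * pts i j)) with (vcomb m c pts j).
    rewrite <- Hqc. unfold q. field. lra. }
  assert (Hc' : forall i, (i < S m)%nat -> F (c' i) /\ 0 < c' i).
  { assert (F (1 + e)) by (apply subfield_add; auto using subfield_1).
    intros [|i] Hi; simpl.
    - split; [apply subfield_div; auto; lra | apply Rdiv_lt_0_compat; lra].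
    - destruct (Hc i) as (? & ? & _); [lia|].
      split; [apply subfield_div; auto; lra | apply Rdiv_lt_0_compat; lra]. }
  assert (Hs' : nsum (S m) c' = 1).
  { simpl. rewrite (nsum_ext m _ (fun i => / (1 + e) * c i)) by (intros; simpl; field; lra).
    rewrite nsum_scal, Hs. field. lra. }
  assert (HU : subsetP (fun u => exists i, (i < S m)%nat /\ u = pts' i) Y).
  { apply HW.
    - intros u ([|i] & Hi & ->); simpl; auto. apply Hc; lia.
    - exists p. split; auto. rewrite Hpc. apply positive_vcomb_relint; auto. }
  apply HU. exists 0%nat. split; [lia | auto].
Qed.

End PolyhedralTrace.
End Subfield.

Theorem theorem4p4 (F : R -> Prop) (n : nat) (X : Vec n -> Prop) :
  is_subfield F ->
  (forall x, X x -> forall i, F (x i)) ->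
  (exists x, X x) ->
  polyhedron (conv allR X) ->
  forall Y : Vec n -> Prop,
    (exists y, Y y) -> subsetP Y X ->
    (weak_face F X Y <->
       exists Fc, face (conv allR X) Fc /\ forall u, Y u <-> Fc u /\ X u) /\
    (forall Fc, face (conv allR X) Fc -> (forall u, Y u <-> Fc u /\ X u) ->
       forall u, conv allR Y u <-> Fc u).
Proof.
  intros HF HXF _ [hs Hhs] Y [y0 Hy0] HYX. split; [split|].
  - intros HW. exists (tight_face n X Y hs).
    split; [exact (tight_face_is_face n X Y hs Hhs HYX y0 Hy0)|].
    intros u. split.
    + intros Hu. pose proof (HYX u Hu) as HXu. split; auto.
      split; [apply subset_conv; [exact I | exact HXu] |]. intros h _ Ht. apply Ht, Hu.
    + intros [[_ Ht] Hx].
      exact (weak_face_contains_trace HF n X Y hs HXF Hhs HYX y0 u HW Hy0 Hx Ht).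
  - intros (Fc & Hface & HY). exact (face_trace_weak_face HF X Y Fc Hface HY).
  - exact (conv_face_trace X Y).
Qed.
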